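(* Let $n\ge 5$ with $n\equiv 1\pmod 4$, fix $\delta_0>0$, and let $T(a,b)=(n-1)^{n-1}a^n+n^nb^{n-1}$. For positive integers $A,B$ and a squarefree integer $d$, let $R_0(d)$ be the number of pairs $(a,b)\in\mathbb Z^2$ with $A\le |a|\le 2A$, $B\le |b|\le 2B$, $\gcd((n-1)a,nb)=1$ and $T(a,b)=d$. Then there is a constant $C>0$ such that for all sufficiently large $A$ and all $B>A^{1+\delta_0}$, $$\sum_{d\ \text{squarefree}}R_0(d)^2\le C\,AB.$$ *)

From mathcomp Require Import all_boot all_algebra.
Set Implicit Arguments. Unset Strict Implicit. Unset Printing Implicit Defensive.
Import GRing.Theory Num.Theory.
Local Open Scope ring_scope.

Definition Tval (n : nat) (a b : int) : int :=
  ((n.-1)%:Z) ^+ (n.-1) * a ^+ n + (n%:Z) ^+ n * b ^+ (n.-1).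

Definition irange (A : nat) : seq int :=
  [seq x <- [seq (k%:Z - (2 * A)%:Z) | k <- iota 0 (4 * A).+1]
     | (A <= `|x|)%N && (`|x| <= 2 * A)%N].

Definition good_pairs (n A B : nat) : seq (int * int) :=
  [seq p <- [seq (a, b) | a <- irange A, b <- irange B]
     | gcdz ((n.-1)%:Z * p.1) (n%:Z * p.2) == 1].

Definition R0 (n A B : nat) (d : int) : nat :=
  count (fun p => Tval n p.1 p.2 == d) (good_pairs n A B).

(* d squarefree: d <> 0 and no prime square divides d
   (any prime p with p^2 | d, d <> 0, satisfies p <= |d|) *)
Definition sqfreez (d : int) : bool :=
  (d != 0) && [forall p : 'I_(`|d|.+1), prime p ==> ~~ (p * p %| `|d|)%N].

(* sum over all squarefree d of R0(d)^2; R0(d) = 0 unless d is a value of T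
   on the good pairs, so the sum ranges over those (finitely many) values *)
Definition sum_R0_sq (n A B : nat) : nat :=
  (\sum_(d <- undup [seq Tval n p.1 p.2 | p <- good_pairs n A B] | sqfreez d)
     R0 n A B d ^ 2)%N.

From mathcomp Require Import all_boot all_algebra.
From mathcomp Require Import all_order lra ring zify.
Set Implicit Arguments. Unset Strict Implicit. Unset Printing Implicit Defensive.

(* The sum of [R0 d ^ 2] counts pairs of pairs with [T(a, b) = T(a', b')]; the
   squarefreeness and coprimality conditions are simply dropped, and of the
   congruence condition on [n] only the oddness of [n] is used.  For [a = a'] the
   equation says [b' ^ (n-1) = b ^ (n-1)], so [b' = +-b] as [n - 1] is even: [O(A B)]
   solutions.  For [a <> a'] it reads
     [n^n (b^(n-1) - b'^(n-1)) = (n-1)^(n-1) (a'^n - a^n) =: c <> 0],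
   and a solution [(b, b')] is determined by the signs of [b], [b'] and by the gap
   [||b| - |b'||], a divisor of [c]; so there are at most [4 tau(|c|)] of them, and
   [tau(|c|) = O(A^delta0)] by the divisor bound [tau(N) = O(N^eps)].  In total this
   is [O(A B + A^(2 + delta0))], which is [O(A B)] because [A^(1 + delta0) < B]. *)

Lemma size_divisors_pfactor p e M : prime p -> 0 < M -> ~~ (p %| M) ->
  size (divisors (M * p ^ e)) <= e.+1 * size (divisors M).
Proof.
move=> p_pr M_gt0 pNM; have p_gt0 := prime_gt0 p_pr.
have N_gt0 : 0 < M * p ^ e by rewrite muln_gt0 M_gt0 expn_gt0 p_gt0.
have lognN : logn p (M * p ^ e) = e.
  by rewrite lognM ?expn_gt0 ?p_gt0 // pfactorK // logn_coprime ?prime_coprime.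
rewrite -(size_iota 0 e.+1) -(size_allpairs (fun i d => d * p ^ i)).
apply: (uniq_leq_size (divisors_uniq _)) => d; rewrite -dvdn_divisors // => dvd_dN.
have [d' cop_pd' def_d] := pfactor_coprime p_pr (dvdn_gt0 N_gt0 dvd_dN).
rewrite def_d; apply/allpairsP; exists (logn p d, d'); split => //=.
- by rewrite -[0 :: _]/(iota 0 e.+1) mem_iota /= add0n ltnS -[X in _ <= X]lognN dvdn_leq_log.
- rewrite -dvdn_divisors // -(@Gauss_dvdl _ _ (p ^ e)); last first.
    by rewrite coprime_sym coprimeXl // coprime_sym.
  by apply: dvdn_trans dvd_dN; rewrite def_d dvdn_mulr.
Qed.

Lemma pfactor_peel p N : prime p -> p %| N -> 0 < N ->
  exists2 M, N = M * p ^ logn p N & [/\ 0 < M, M < N, ~~ (p %| M) & M %| N].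
Proof.
move=> p_pr dvd_pN N_gt0; have [M cop_pM defN] := pfactor_coprime p_pr N_gt0.
exists M => //; have M_gt0 : 0 < M by move: N_gt0; rewrite defN muln_gt0 => /andP[].
split=> //; last by rewrite defN dvdn_mulr.
- have e_gt0 : 0 < logn p N by rewrite -pfactor_dvdn // expn1.
  rewrite defN -[X in X < _]muln1 ltn_pmul2l //.
  exact: leq_ltn_trans e_gt0 (ltn_expl _ (prime_gt1 p_pr)).
- by rewrite -(prime_coprime _ p_pr).
Qed.

Lemma leq_expn2r e m n : m <= n -> m ^ e <= n ^ e.
Proof. by case: e => // e; rewrite leq_exp2r. Qed.

Lemma succ_exp_le_mul_exp2 k e : 0 < k -> e.+1 ^ k <= k ^ k * 2 ^ e.
Proof.
move=> k_gt0; set t := e %/ k.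
have le_e1 : e.+1 <= k * t.+1 by rewrite mulnC -ltn_divLR.
have le_t1 : t.+1 <= 2 ^ t by apply: ltn_expl.
apply: leq_trans (leq_expn2r k le_e1) _.
rewrite expnMn leq_mul2l; apply/orP; right.
apply: leq_trans (leq_expn2r k le_t1) _.
by rewrite -expnM leq_pexp2l // leq_divM.
Qed.

(* [tau(N)^k / N] is the product over [p^e || N] of [(e + 1)^k / p^e], which is at
   most [1] when [p >= 2^k] and at most [k^k] otherwise. *)
Section DivisorBound.

Variable k : nat.
Hypothesis k_gt0 : 0 < k.

Lemma size_divisors_exp_le_large N : 0 < N ->
  (forall p, prime p -> p %| N -> 2 ^ k <= p) -> size (divisors N) ^ k <= N.
Proof.
elim/ltn_ind: N => N IHN N_gt0 large.
have [N_gt1 | N_le1] := ltnP 1 N; last first.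
  have -> : N = 1 by apply/eqP; rewrite eqn_leq N_le1.
  by rewrite exp1n.
have p_pr := pdiv_prime N_gt1; have dvd_pN := pdiv_dvd N.
set p := pdiv N in p_pr dvd_pN.
have [M defN [M_gt0 ltMN pNM dvd_MN]] := pfactor_peel p_pr dvd_pN N_gt0.
set e := logn p N in defN.
rewrite defN; apply: leq_trans (leq_expn2r k (size_divisors_pfactor e p_pr M_gt0 pNM)) _.
rewrite expnMn mulnC leq_mul //.
  apply: IHN => // q q_pr dvd_qM; apply: large => //; exact: dvdn_trans dvd_MN.
apply: leq_trans (leq_expn2r k (ltn_expl e (ltnSn 1))) _.
by rewrite -expnM mulnC expnM leq_expn2r // large.
Qed.

Lemma size_divisors_exp_le_small j N : 0 < N ->
  (forall p, prime p -> p %| N -> p < 2 ^ k -> p < j) ->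
  size (divisors N) ^ k <= (k ^ k) ^ j * N.
Proof.
elim: j N => [|j IHj] N N_gt0 small.
  rewrite mul1n; apply: size_divisors_exp_le_large => // p p_pr dvd_pN.
  by rewrite leqNgt; apply/negP => /(small p p_pr dvd_pN).
have [/and3P[j_pr dvd_jN j_small] | not_peel] := boolP [&& prime j, j %| N & j < 2 ^ k].
  have [M defN [M_gt0 _ jNM dvd_MN]] := pfactor_peel j_pr dvd_jN N_gt0.
  set e := logn j N in defN.
  have tauM : size (divisors M) ^ k <= (k ^ k) ^ j * M.
    apply: IHj => // p p_pr dvd_pM p_small.
    rewrite ltn_neqAle -ltnS small ?andbT //; last exact: dvdn_trans dvd_MN.
    by apply: contraNneq jNM => <-.
  rewrite defN; apply: leq_trans (leq_expn2r k (size_divisors_pfactor e j_pr M_gt0 jNM)) _.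
  rewrite expnMn expnS mulnC.
  have -> : k ^ k * (k ^ k) ^ j * (M * j ^ e) = ((k ^ k) ^ j * M) * (k ^ k * j ^ e) by ring.
  apply: leq_mul tauM _; apply: leq_trans (succ_exp_le_mul_exp2 e k_gt0) _.
  by rewrite leq_mul2l leq_expn2r ?orbT ?prime_gt1.
apply: leq_trans (IHj N N_gt0 _) _; last by rewrite expnS -mulnA leq_pmull ?expn_gt0 ?k_gt0.
move=> p p_pr dvd_pN p_small; rewrite ltn_neqAle -ltnS small ?andbT //.
by apply: contraNneq not_peel => <-; rewrite p_pr dvd_pN p_small.
Qed.

Lemma size_divisors_exp_le : exists C, forall N, size (divisors N) ^ k <= C * N.+1.
Proof.
exists ((k ^ k) ^ (2 ^ k)) => [[|N]].
  by rewrite /= exp1n muln1 !expn_gt0 k_gt0.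
apply: leq_trans (@size_divisors_exp_le_small (2 ^ k) N.+1 _ _) _ => //.
by rewrite leq_mul2l leqnSn orbT.
Qed.

End DivisorBound.

Lemma count_allpairs (T1 T2 : Type) (s : seq T1) (t : seq T2) (r : pred (T1 * T2)) :
  count r [seq (x, y) | x <- s, y <- t] = \sum_(x <- s) count (fun y => r (x, y)) t.
Proof.
elim: s => [|x s IHs]; first by rewrite big_nil.
by rewrite big_cons /= count_cat count_map IHs.
Qed.

Lemma sum_count_undup_sq (T U : eqType) (f : T -> U) (s : seq T) :
  \sum_(d <- undup (map f s)) count (fun x => f x == d) s ^ 2 =
  \sum_(x <- s) count (fun y => f y == f x) s.
Proof.
have split_fiber x : x \in s -> count (fun y => f y == f x) s =
    \sum_(d <- undup (map f s)) (f x == d) * count (fun y => f y == d) s.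
  move=> s_x; rewrite (bigD1_seq (f x)) ?undup_uniq ?mem_undup ?map_f //=.
  by rewrite eqxx mul1n big1 ?addn0 // => d /negPf; rewrite eq_sym => ->.
rewrite (eq_big_seq _ split_fiber) exchange_big /=; apply: eq_bigr => d _.
rewrite -big_distrl /= expnS expn1 mulnC; congr (_ * _).
by rewrite -sum1_count big_mkcond /=; apply: eq_bigr => x _; case: eqP.
Qed.

Lemma leq_sum_except1 (T : eqType) (s : seq T) (a : T) (F : T -> nat) X Y :
  uniq s -> a \in s -> (forall x, x \in s -> F x <= if x == a then X else Y) ->
  \sum_(x <- s) F x <= X + size s * Y.
Proof.
move=> s_uniq s_a leF; rewrite (bigD1_seq a) //=.
apply: leq_add; first by have := leF a s_a; rewrite eqxx.
rewrite big_seq_cond; apply: leq_trans (_ : _ <= \sum_(x <- s | (x \in s) && (x != a)) Y) _.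
  by apply: leq_sum => x /andP[s_x /negPf neq_xa]; have := leF x s_x; rewrite neq_xa.
by rewrite big_const_seq iter_addn_0 mulnC leq_mul2r count_size orbT.
Qed.

Import Order.TTheory GRing.Theory Num.Theory.
Local Open Scope ring_scope.

Section PowerDifferences.

Variable R : realDomainType.
Implicit Types x y u v h : R.

Lemma ler_exprD_shift m x y h : 0 <= x -> x <= y -> 0 <= h ->
  (x + h) ^+ m + y ^+ m <= (y + h) ^+ m + x ^+ m.
Proof.
move=> x_ge0 le_xy h_ge0; elim: m => [|m IHm]; first by rewrite !expr0.
rewrite !exprS.
set a := (x + h) ^+ m in IHm *; set b := y ^+ m in IHm *.
set c := (y + h) ^+ m in IHm *; set d := x ^+ m in IHm *.
have le_da : d <= a by apply: lerXn2r; rewrite ?nnegrE; lra.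
have le_db : d <= b by apply: lerXn2r; rewrite ?nnegrE; lra.
have : 0 <= (y + h) * (c + d - a - b) by apply: mulr_ge0; lra.
have : 0 <= (y - x) * (a - d) by apply: mulr_ge0; lra.
have : 0 <= h * (b - d) by apply: mulr_ge0; lra.
nra.
Qed.

Lemma ltr_exprD_shift m x y h : (1 < m)%N -> 0 <= x -> x < y -> 0 < h ->
  (x + h) ^+ m + y ^+ m < (y + h) ^+ m + x ^+ m.
Proof.
case: m => [|[|m]] // _ x_ge0 lt_xy h_gt0.
have IHm := ler_exprD_shift m.+1 x_ge0 (ltW lt_xy) (ltW h_gt0).
rewrite !(exprS _ m.+1).
set a := (x + h) ^+ m.+1 in IHm *; set b := y ^+ m.+1 in IHm *.
set c := (y + h) ^+ m.+1 in IHm *; set d := x ^+ m.+1 in IHm *.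
have lt_da : d < a by rewrite ltrXn2r //; lra.
have le_db : d <= b by apply: lerXn2r; rewrite ?nnegrE; lra.
have : 0 <= (y + h) * (c + d - a - b) by apply: mulr_ge0; lra.
have : 0 < (y - x) * (a - d) by apply: mulr_gt0; lra.
have : 0 <= h * (b - d) by apply: mulr_ge0; lra.
nra.
Qed.

(* For a fixed gap [d > 0], [u |-> (u + d) ^+ m - u ^+ m] is strictly increasing
   on nonnegative [u] by [ltr_exprD_shift]. *)
Lemma eq_subrXX_dist m u v u' v' : (1 < m)%N ->
  0 <= u -> 0 <= v -> 0 <= u' -> 0 <= v' -> u != v ->
  u ^+ m - v ^+ m = u' ^+ m - v' ^+ m -> `|u - v| = `|u' - v'| -> u = u' /\ v = v'.
Proof.
move=> m_gt1; wlog lt_uv : u v u' v' / u < v.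
  move=> wlog_lt u_ge0 v_ge0 u'_ge0 v'_ge0 neq_uv eqX eq_dist.
  have [lt_uv | lt_vu | eq_uv] := ltrgtP u v; first exact: wlog_lt.
  - have [] // := wlog_lt v u v' u' lt_vu; rewrite 1?eq_sym 1?distrC 1?[`|_ - u'|]distrC //.
    by apply: oppr_inj; rewrite !opprB.
  - by rewrite eq_uv eqxx in neq_uv.
move=> u_ge0 v_ge0 u'_ge0 v'_ge0 _ eqX eq_dist.
have lt_u'v' : u' < v'.
  rewrite ltNge; apply/negP => le_v'u'.
  have : v' ^+ m <= u' ^+ m by apply: lerXn2r; rewrite ?nnegrE.
  have : u ^+ m < v ^+ m by rewrite ltrXn2r // -lt0n ltnW.
  lra.
rewrite distrC gtr0_norm ?subr_gt0 // distrC gtr0_norm ?subr_gt0 // in eq_dist.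
set d := v - u in eq_dist.
have def_v : v = u + d by rewrite /d; ring.
have def_v' : v' = u' + d by rewrite eq_dist; ring.
have d_gt0 : 0 < d by rewrite /d subr_gt0.
suff eq_uu' : u = u' by split=> //; rewrite def_v def_v' eq_uu'.
have [lt_uu' | lt_u'u | //] := ltrgtP u u'.
- by have := ltr_exprD_shift m_gt1 u_ge0 lt_uu' d_gt0; rewrite -def_v -def_v'; lra.
- by have := ltr_exprD_shift m_gt1 u'_ge0 lt_u'u d_gt0; rewrite -def_v -def_v'; lra.
Qed.

Lemma exprn_even_norm m x : ~~ odd m -> x ^+ m = `|x| ^+ m.
Proof. by move=> m_even; rewrite -normrX ger0_norm // exprn_even_ge0. Qed.

Lemma sign_norm_inj x y : (x < 0) = (y < 0) -> `|x| = `|y| -> x = y.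
Proof.
case: (ltrP x 0) => x0; case: (ltrP y 0) => y0 //= _.
- by rewrite !ltr0_norm // => /oppr_inj.
- by rewrite !ger0_norm.
Qed.

Lemma exprn_odd_inj m x y : odd m -> x ^+ m = y ^+ m -> x = y.
Proof.
move=> m_odd eqX; have m_gt0 : (0 < m)%N by case: m m_odd eqX.
have : `|x| == `|y| by rewrite -(eqrXn2 m_gt0) ?normr_ge0 // -!normrX eqX.
rewrite eqr_norm2 => /orP[/eqP // | /eqP def_x].
move: eqX; rewrite def_x exprNn -signr_odd m_odd expr1 mulN1r => eqX.
have /eqP : y ^+ m = 0 by lra.
by rewrite expf_eq0 => /andP[_ /eqP ->]; rewrite oppr0.
Qed.

Lemma count_exprn_even_eq (s : seq R) m y : uniq s -> (0 < m)%N -> ~~ odd m ->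
  (count (fun x => x ^+ m == y ^+ m) s <= 2)%N.
Proof.
move=> s_uniq m_gt0 m_even.
apply: leq_trans (sub_count (a2 := predU (pred1 y) (pred1 (- y))) _ s) _.
  move=> x /=; rewrite (exprn_even_norm x m_even) (exprn_even_norm y m_even).
  by rewrite eqrXn2 ?normr_ge0 // eqr_norm2.
rewrite -(leq_add2r (count (predI (pred1 y) (pred1 (- y))) s)) count_predUI.
have count_y (z : R) : (count (pred1 z) s <= 1)%N by rewrite count_uniq_mem // leq_b1.
exact: leq_trans (leq_add (count_y y) (count_y (- y))) (leq_addr _ _).
Qed.

End PowerDifferences.

(* A solution [(x, y)] is determined by the signs of [x] and [y] together with
   the gap [| |x| - |y| |] (by [eq_subrXX_dist]), and that gap divides [c]. *)
Lemma count_pairs_subrXX_eq (s : seq int) (K c : int) m :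
  uniq s -> K != 0 -> c != 0 -> (1 < m)%N -> ~~ odd m ->
  (count (fun q : int * int => (K * (q.1 ^+ m - q.2 ^+ m) == c)%R)
     [seq (x, y) | x <- s, y <- s] <= 4 * size (divisors `|c|%N))%N.
Proof.
move=> s_uniq K_neq0 c_neq0 m_gt1 m_even; rewrite -size_filter.
set S := filter _ _.
pose code (q : int * int) := (q.1 < 0, q.2 < 0, absz (`|q.1| - `|q.2|)).
pose signs := [:: (true, true); (true, false); (false, true); (false, false)].
pose codes := [seq (sgn, g) | sgn <- signs, g <- divisors `|c|%N].
have S_uniq : uniq S.
  by apply/filter_uniq/allpairs_uniq => // -[x y] [x' y'] _ _ /= [-> ->].
have eq_c q : q \in S -> K * (`|q.1| ^+ m - `|q.2| ^+ m) = c.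
  by rewrite mem_filter => /andP[/eqP <- _]; rewrite -!exprn_even_norm.
have -> : (4 * size (divisors `|c|%N) = size codes)%N by rewrite size_allpairs.
rewrite -(size_map code); apply: uniq_leq_size.
- rewrite map_inj_in_uniq // => -[x y] [x' y'] /eq_c /= c_xy /eq_c /= c_x'y' [sx sy gap].
  have eqX : `|x| ^+ m - `|y| ^+ m = `|x'| ^+ m - `|y'| ^+ m.
    by apply: (mulfI K_neq0); rewrite c_xy c_x'y'.
  have neq_xy : `|x| != `|y|.
    by apply: contra_neq c_neq0 => eq_xy; rewrite -c_xy eq_xy subrr mulr0.
  have eq_gap : `|(`|x| - `|y|)| = `|(`|x'| - `|y'|)| by rewrite -!abszE gap.
  have [eq_x eq_y] := eq_subrXX_dist m_gt1 (normr_ge0 _) (normr_ge0 _)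
    (normr_ge0 _) (normr_ge0 _) neq_xy eqX eq_gap.
  by rewrite (sign_norm_inj sx eq_x) (sign_norm_inj sy eq_y).
- move=> _ /mapP[q /eq_c c_q ->]; apply/allpairsP.
  exists ((q.1 < 0, q.2 < 0), absz (`|q.1| - `|q.2|)); split => //.
    by case: (q.1 < 0); case: (q.2 < 0).
  rewrite -dvdn_divisors ?absz_gt0 // -c_q subrXX.
  by apply/dvdz_mull/dvdz_mulr/dvdzz.
Qed.

Lemma irange_uniq A : uniq (irange A).
Proof.
apply: filter_uniq; rewrite map_inj_uniq ?iota_uniq // => x y /addIr.
by move/eqP; rewrite eqz_nat => /eqP.
Qed.

Lemma size_irange A : (size (irange A) <= (4 * A).+1)%N.
Proof. by rewrite size_filter (leq_trans (count_size _ _)) // size_map size_iota. Qed.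

Lemma irange_norm A x : x \in irange A -> (`|x| <= 2 * A)%N.
Proof. by rewrite mem_filter => /andP[/andP[_ ->]]. Qed.

Lemma sum_R0_sq_le_sum_count n A B : (sum_R0_sq n A B <=
  \sum_(a <- irange A) \sum_(a' <- irange A) \sum_(b <- irange B)
     count (fun b' => Tval n a' b' == Tval n a b) (irange B))%N.
Proof.
set T := fun p : int * int => Tval n p.1 p.2.
set P := [seq (a, b) | a <- irange A, b <- irange B].
apply: (@leq_trans (\sum_(p <- P) count (fun q => T q == T p) P)%N).
  rewrite /sum_R0_sq big_mkcond /=.
  apply: leq_trans (_ : _ <= \sum_(d <- undup (map T (good_pairs n A B))) R0 n A B d ^ 2)%N _.
    by apply: leq_sum => d _; case: ifP.
  rewrite /R0 (sum_count_undup_sq T) /good_pairs big_filter big_mkcond /=.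
  apply: leq_sum => p _; case: ifP => // _; rewrite count_filter.
  by apply: sub_count => q /andP[].
rewrite big_allpairs; apply: leq_sum => a _.
by under eq_bigr => b _ do rewrite count_allpairs; rewrite exchange_big.
Qed.

Definition Tdiff n (a a' : int) : int := (n.-1)%:Z ^+ n.-1 * (a' ^+ n - a ^+ n).

Lemma Tval_eq n a b a' b' :
  (Tval n a' b' == Tval n a b) = (n%:Z ^+ n * (b ^+ n.-1 - b' ^+ n.-1) == Tdiff n a a').
Proof. by rewrite /Tval /Tdiff; apply/eqP/eqP => ?; lra. Qed.

Section TFibers.

Variable n : nat.
Hypotheses (n_gt2 : (2 < n)%N) (n_odd : odd n).

Let m_gt1 : (1 < n.-1)%N. Proof. by case: n n_gt2. Qed.
Let m_even : ~~ odd n.-1. Proof. by case: n n_odd. Qed.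
Let mm_neq0 : (n.-1)%:Z ^+ n.-1 != 0.
Proof. by rewrite expf_neq0 // eqz_nat -lt0n (ltn_trans _ m_gt1). Qed.
Let nn_neq0 : n%:Z ^+ n != 0.
Proof. by rewrite expf_neq0 // eqz_nat -lt0n (ltn_trans _ n_gt2). Qed.

Lemma count_Tval_eq_same a b B :
  (count (fun b' => Tval n a b' == Tval n a b) (irange B) <= 2)%N.
Proof.
rewrite (eq_count (a2 := fun b' => b' ^+ n.-1 == b ^+ n.-1)).
  exact: count_exprn_even_eq (irange_uniq B) (ltnW m_gt1) m_even.
by move=> b'; rewrite Tval_eq /Tdiff subrr mulr0 mulf_eq0 (negPf nn_neq0) subr_eq0 eq_sym.
Qed.

Lemma sum_count_Tval_eq_diff a a' B : a != a' ->
  (\sum_(b <- irange B) count (fun b' => Tval n a' b' == Tval n a b) (irange B)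
     <= 4 * size (divisors `|Tdiff n a a'|%N))%N.
Proof.
move=> neq_aa'; have Tdiff_neq0 : Tdiff n a a' != 0.
  rewrite mulf_neq0 // subr_eq0.
  by apply: contra_neq neq_aa' => /(exprn_odd_inj n_odd) ->.
have := count_pairs_subrXX_eq (irange_uniq B) nn_neq0 Tdiff_neq0 m_gt1 m_even.
by rewrite count_allpairs; under eq_bigr => b _ do under eq_count => b' do rewrite -Tval_eq.
Qed.

End TFibers.

Definition Tdiff_ndivisors_max n A : nat :=
  (\max_(a <- irange A) \max_(a' <- irange A) size (divisors `|Tdiff n a a'|%N))%N.

Lemma sum_R0_sq_le n A B : (2 < n)%N -> odd n ->
  (sum_R0_sq n A B <=
   (4 * A).+1 * (2 * (4 * B).+1 + (4 * A).+1 * (4 * Tdiff_ndivisors_max n A)))%N.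
Proof.
move=> n_gt2 n_odd; apply: leq_trans (sum_R0_sq_le_sum_count n A B) _.
rewrite big_seq; apply: leq_trans (_ : _ <= \sum_(a <- irange A | a \in irange A)
    (2 * (4 * B).+1 + (4 * A).+1 * (4 * Tdiff_ndivisors_max n A)))%N _; last first.
  by rewrite -big_seq big_const_seq iter_addn_0 mulnC leq_mul2r count_predT size_irange orbT.
apply: leq_sum => a A_a; apply: leq_trans (leq_sum_except1 (X := 2 * size (irange B))
  (Y := 4 * Tdiff_ndivisors_max n A) (irange_uniq A) A_a _) _.
- move=> a' A_a'; rewrite eq_sym; have [<- | neq_aa'] := eqVneq a a'.
    apply: leq_trans (_ : _ <= \sum_(b <- irange B) 2)%N _.
      by apply: leq_sum => b _; apply: count_Tval_eq_same.
    by rewrite big_const_seq iter_addn_0 count_predT mulnC.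
  apply: leq_trans (sum_count_Tval_eq_diff n_gt2 n_odd B neq_aa') _.
  rewrite leq_mul2l /Tdiff_ndivisors_max; apply/orP; right.
  apply: leq_trans (leq_bigmax_seq (F := fun a => \max_(a' <- irange A)
    size (divisors `|Tdiff n a a'|%N)) _ A_a isT).
  exact: (leq_bigmax_seq (F := fun a' => size (divisors `|Tdiff n a a'|%N)) _ A_a' isT).
- by rewrite leq_add ?leq_mul2l ?leq_mul2r ?size_irange ?orbT.
Qed.

Lemma Tdiff_absz_le n A a a' : a \in irange A -> a' \in irange A ->
  (`|Tdiff n a a'| <= 2 * (n.-1 ^ n.-1 * (2 * A) ^ n))%N.
Proof.
move=> A_a A_a'; rewrite /Tdiff abszM abszX absz_nat mulnCA leq_mul2l; apply/orP; right.
apply: leq_trans (leqD_dist _ 0 _) _; rewrite subr0 sub0r abszN !abszX mul2n -addnn.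
by rewrite leq_add // leq_expn2r // irange_norm.
Qed.

Lemma Tdiff_ndivisors_max_exp_le n k : (0 < k)%N ->
  exists C, forall A, (0 < A)%N -> (Tdiff_ndivisors_max n A ^ k <= C * A ^ n)%N.
Proof.
move=> k_gt0; have [C tauC] := size_divisors_exp_le k_gt0.
exists (C * (2 * (n.-1 ^ n.-1 * 2 ^ n)).+1)%N => A A_gt0.
have bound_a a a' : a \in irange A -> a' \in irange A ->
    (size (divisors `|Tdiff n a a'|) ^ k <= C * (2 * (n.-1 ^ n.-1 * 2 ^ n)).+1 * A ^ n)%N.
  move=> A_a A_a'; apply: leq_trans (tauC _) _; rewrite -mulnA leq_mul2l.
  apply/orP; right; rewrite mulSn -addn1 addnC leq_add ?expn_gt0 ?A_gt0 //.
  by apply: leq_trans (Tdiff_absz_le n A_a A_a') _; rewrite expnMn !mulnA.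
rewrite /Tdiff_ndivisors_max big_seq.
apply: (big_ind (fun x => x ^ k <= _)%N) => [|x y|a A_a]; first by rewrite exp0n.
  by case: (leqP x y).
rewrite big_seq; apply: (big_ind (fun x => x ^ k <= _)%N) => [|x y|a' A_a'].
- by rewrite exp0n.
- by case: (leqP x y).
- exact: bound_a.
Qed.

Close Scope ring_scope.

From Stdlib Require Import Reals.
From Stdlib Require Lra.
Local Open Scope R_scope.

Lemma INR_expn (m k : nat) : INR (expn m k) = INR m ^ k.
Proof. by elim: k => [|k IHk] //; rewrite expnS mult_INR IHk. Qed.

Lemma le_INR_leq (m k : nat) : leq m k -> INR m <= INR k.
Proof. by move/ssrnat.leP; apply: le_INR. Qed.

Lemma INR_le_Rpower_of_expn_le (D C A n k : nat) (d : R) :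
  leq 1 k -> leq 1 A -> INR n <= INR k * d -> leq (expn D k) (muln C (expn A n)) ->
  INR D <= Rpower (INR C) (/ INR k) * Rpower (INR A) d.
Proof.
move=> k_gt0 A_gt0 n_le_kd le_Dk.
have Rpower_pos x y : 0 <= Rpower x y by apply/Rlt_le/exp_pos.
have [-> | D_gt0] := posnP D; first by apply: Rmult_le_pos.
have C_gt0 : leq 1 C.
  have : leq 1 (expn D k) by rewrite expn_gt0 D_gt0.
  by move/leq_trans/(_ le_Dk); rewrite muln_gt0 => /andP[].
have kR : 0 < INR k by apply/lt_0_INR/ssrnat.ltP.
have DR : 0 < INR D by apply/lt_0_INR/ssrnat.ltP.
have CR : 0 < INR C by apply/lt_0_INR/ssrnat.ltP.
have AR : 1 <= INR A by apply: (le_INR_leq A_gt0).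
have le_DkR : INR D ^ k <= INR C * INR A ^ n by rewrite -!INR_expn -mult_INR; apply: le_INR_leq.
have -> : INR D = Rpower (INR D ^ k) (/ INR k).
  by rewrite -Rpower_pow // Rpower_mult Rinv_r ?Rpower_1 //; Lra.lra.
apply: Rle_trans (Rle_Rpower_l _ _ _ _ _) _.
- by apply/Rlt_le/Rinv_0_lt_compat.
- by split; [apply: pow_lt | exact: le_DkR].
rewrite -Rpower_mult_distr //; last by apply: pow_lt; Lra.lra.
apply: Rmult_le_compat_l; first exact: Rpower_pos.
rewrite -Rpower_pow ?Rpower_mult; last by Lra.lra.
apply: Rle_Rpower => //; apply: (Rmult_le_reg_r (INR k)) => //.
rewrite Rmult_assoc Rinv_l; Lra.lra.
Qed.

Theorem lemma5 (n : nat) (delta0 : R) :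
  leq 5 n -> modn n 4 = 1%nat -> 0 < delta0 ->
  exists C : R, 0 < C /\
  exists A0 : nat, forall A B : nat, leq A0 A -> leq 1 A -> leq 1 B ->
    INR B > Rpower (INR A) (1 + delta0) ->
    INR (sum_R0_sq n A B) <= C * INR A * INR B.
Proof.
move=> n_ge5 n_mod4 delta0_gt0.
have n_odd : odd n by rewrite (divn_eq n 4) n_mod4 oddD oddM andbF.
have n_gt2 : leq 3 n by apply: leq_trans n_ge5.
have [k n_lt_kd] := INR_archimed delta0 (INR n) delta0_gt0.
have k_gt0 : leq 1 k by case: k n_lt_kd => // /Rgt_not_le[]; rewrite Rmult_0_l; apply: pos_INR.
have [C max_le] := Tdiff_ndivisors_max_exp_le n k_gt0.
set c := Rpower (INR C) (/ INR k); have c_gt0 : 0 < c by apply: exp_pos.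
exists (50 + 100 * c); split; first by Lra.lra.
exists 1%nat => A B _ A_ge1 B_ge1; rewrite Rpower_plus Rpower_1; last exact/lt_0_INR/ssrnat.ltP.
have := INR_le_Rpower_of_expn_le k_gt0 A_ge1 (Rlt_le _ _ n_lt_kd) (max_le A A_ge1).
have : leq (sum_R0_sq n A B)
    (50 * (A * B) + 100 * (A * (A * Tdiff_ndivisors_max n A))).
  by apply: leq_trans (sum_R0_sq_le A B n_gt2 n_odd) _; nia.
move/le_INR_leq; rewrite plus_INR (mult_INR 50) (mult_INR 100) !(mult_INR A).
have [-> ->] : INR 50 = 50 /\ INR 100 = 100 by rewrite !INR_IZR_INZ.
rewrite -/c; set a := INR A; set b := INR B; set P := Rpower a delta0.
set S := INR (sum_R0_sq n A B); set D := INR (Tdiff_ndivisors_max n A).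
move=> S_le D_le aP_lt_b.
have a_ge0 : 0 <= a by apply: pos_INR.
have : 0 <= a * a * (c * P - D) by apply: Rmult_le_pos; [apply: Rmult_le_pos | Lra.lra].
have : 0 <= c * a * (b - a * P) by apply: Rmult_le_pos; [apply: Rmult_le_pos | ]; Lra.lra.
Lra.lra.
Qed.
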